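(* Let $A$ be a finite non-empty alphabet. For all non-empty words $\mathbf a,\mathbf b\in A^+$ of equal length, $\mathbf a:\mathbf a^r::\mathbf b:\mathbf b^r$ holds in $(A^+,\cdot,A^+)$. Consequently $\mathbf a:\mathbf a^r::\mathbf a^r:\mathbf a$ for every $\mathbf a\in A^+$.
   Context: $A^+$ is the set of non-empty finite words over $A$; $\mathbf a^r:=a_n\ldots a_1$ is the reverse of $\mathbf a=a_1\ldots a_n$. $(A^+,\cdot,A^+)$ is the algebra with universe $A^+$, concatenation, and every non-empty word as a constant. Terms are built from a denumerable variable set, concatenation and these constants; $X(s)$ is the set of variables of $s$. A justification is a pair $s\to t$ with $X(t)\subseteq X(s)$. $\uparrow(\mathbf a\to\mathbf b)$ is the set of justifications $s\to t$ with $\mathbf a=s(\mathbf o)$, $\mathbf b=t(\mathbf o)$ for some tuple $\mathbf o$ of elements of $A^+$; $\uparrow(\mathbf a\to\mathbf b:\!\cdot\,\mathbf c\to\mathbf d):=\uparrow(\mathbf a\to\mathbf b)\cap\uparrow(\mathbf c\to\mathbf d)$. A justification is trivial if it lies in all sets $\uparrow(\mathbf a'\to\mathbf b':\!\cdot\,\mathbf c'\to\mathbf d')$. $\mathbf a\to\mathbf b:\!\cdot\,\mathbf c\to\mathbf d$ holds iff either (i) all justifications in $\uparrow(\mathbf a\to\mathbf b)\cup\uparrow(\mathbf c\to\mathbf d)$ are trivial, or (ii) $J_{\mathbf d}:=\uparrow(\mathbf a\to\mathbf b:\!\cdot\,\mathbf c\to\mathbf d)$ contains a non-trivial justification and for every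 $\mathbf d'$, $J_{\mathbf d}\subseteq J_{\mathbf d'}$ implies $J_{\mathbf d'}$ contains a non-trivial justification and $J_{\mathbf d'}\subseteq J_{\mathbf d}$ (ignoring trivial justifications). $\mathbf a:\mathbf b::\mathbf c:\mathbf d$ iff $\mathbf a\to\mathbf b:\!\cdot\,\mathbf c\to\mathbf d$, $\mathbf b\to\mathbf a:\!\cdot\,\mathbf d\to\mathbf c$, $\mathbf c\to\mathbf d:\!\cdot\,\mathbf a\to\mathbf b$, $\mathbf d\to\mathbf c:\!\cdot\,\mathbf b\to\mathbf a$ all hold. *)

From mathcomp Require Import all_boot.
Set Implicit Arguments.
Unset Strict Implicit.
Unset Printing Implicit Defensive.

Section Analogy.
Variable A : finType.

(* Elements of A^+ are represented as words w : seq A with w != [::]. *)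
Definition neword := {w : seq A | w != [::]}.

Inductive term : Type :=
| TVar of nat
| TCst of neword
| TCat of term & term.

Fixpoint vars (s : term) : seq nat :=
  match s with
  | TVar n => [:: n]
  | TCst _ => [::]
  | TCat s1 s2 => vars s1 ++ vars s2
  end.

Fixpoint eval (o : nat -> seq A) (s : term) : seq A :=
  match s with
  | TVar n => o n
  | TCst w => sval w
  | TCat s1 s2 => eval o s1 ++ eval o s2
  end.

Definition justification (j : term * term) : Prop :=
  {subset vars j.2 <= vars j.1}.

Definition up (a b : seq A) (j : term * term) : Prop :=
  justification j /\
  exists o : nat -> seq A, (forall n, o n != [::]) /\
    eval o j.1 = a /\ eval o j.2 = b.

Definition up2 (a b c d : seq A) (j : term * term) : Prop :=
  up a b j /\ up c d j.

Definition trivial_just (j : term * term) : Prop :=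
  forall a' b' c' d' : seq A, a' != [::] -> b' != [::] -> c' != [::] ->
    d' != [::] -> up2 a' b' c' d' j.

Definition nt_subset (J J' : term * term -> Prop) : Prop :=
  forall j, J j -> ~ trivial_just j -> J' j.

Definition has_nontrivial (J : term * term -> Prop) : Prop :=
  exists j, J j /\ ~ trivial_just j.

Definition arrow_prop (a b c d : seq A) : Prop :=
  (forall j, up a b j \/ up c d j -> trivial_just j)
  \/
  (has_nontrivial (up2 a b c d) /\
   forall d' : seq A, d' != [::] ->
     nt_subset (up2 a b c d) (up2 a b c d') ->
     has_nontrivial (up2 a b c d') /\ nt_subset (up2 a b c d') (up2 a b c d)).

Definition analogy (a b c d : seq A) : Prop :=
  arrow_prop a b c d /\ arrow_prop b a d c /\
  arrow_prop c d a b /\ arrow_prop d c b a.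

End Analogy.

(** Every justification is non-trivial: a trivial one would lie in
    [up([c] -> [c]) ∩ up([c] -> [c c])], but a one-letter left-hand side pins
    every variable of [s], hence the value of [t].  The justification
    [x_0 ... x_n -> x_n ... x_0] lies in [up(a -> a^r)] for every word [a] of
    length [n + 1], and when [x_0 ... x_n] evaluates to a word of that length
    every [x_i] is a single letter, so [up(b -> d')] forces [d' = b^r].  Hence
    [J_d'] can contain [J_(b^r)] only for [d' = b^r], and clause (ii) holds. *)

From mathcomp Require Import all_boot.
From mathcomp Require Import zify.

Lemma rev_neq0 {T : eqType} {w : seq T} : w != [::] -> rev w != [::].
Proof. by rewrite -!nilpE rev_nilp. Qed.

Section ReversalAnalogy.
Variable A : finType.

Implicit Types (o : nat -> seq A) (s t : term A) (a b w : seq A).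

Lemma eval_neq0 o s : (forall n, o n != [::]) -> eval o s != [::].
Proof.
move=> ho; elim: s => [n|w|s1 IH1 s2 _] //=; first exact: valP w.
by case: (eval o s1) IH1.
Qed.

Lemma eq_in_eval o o' t : {in vars t, o =1 o'} -> eval o t = eval o' t.
Proof.
elim: t => [n|w|s1 IH1 s2 IH2] //= eq_o; first by apply: eq_o; rewrite inE.
by rewrite IH1 ?IH2 // => n n_s; apply: eq_o; rewrite mem_cat n_s ?orbT.
Qed.

Lemma eval_size1 {o s} : (forall n, o n != [::]) -> size (eval o s) = 1 ->
  {in vars s, forall n, o n = eval o s}.
Proof.
move=> ho; case: s => [m|w|s1 s2] //= size1 n; first by rewrite inE => /eqP ->.
have := eval_neq0 o s1 ho; have := eval_neq0 o s2 ho.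
by move: size1; case: (eval o s1) => [|? [|? ?]]; case: (eval o s2).
Qed.

Lemma not_trivial_just (c : A) (j : term A * term A) : ~ trivial_just j.
Proof.
move=> triv_j.
have [[j_just [o [ho [o_s o_t]]]] [_ [o' [ho' [o'_s o'_t]]]]] :=
  triv_j [:: c] [:: c] [:: c] [:: c; c] isT isT isT isT.
suff : eval o j.2 = eval o' j.2 by rewrite o_t o'_t.
apply: eq_in_eval => n /j_just n_s.
by rewrite (eval_size1 ho _ _ n_s) ?(eval_size1 ho' _ _ n_s) ?o_s ?o'_s.
Qed.

Fixpoint tword (x : nat) (l : seq nat) : term A :=
  if l is y :: l' then TCat (TVar A x) (tword y l') else TVar A x.

Lemma vars_tword x l : vars (tword x l) = x :: l.
Proof. by elim: l x => [|y l IH] x //=; rewrite IH. Qed.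

Lemma eval_tword o x l : eval o (tword x l) = flatten (map o (x :: l)).
Proof. by elim: l x => [|y l IH] x /=; rewrite ?cats0 ?IH. Qed.

Lemma size_flatten_map_ge o l : (forall n, o n != [::]) ->
  size l <= size (flatten (map o l)).
Proof.
move=> ho; elim: l => [|x l IH] //=; rewrite size_cat.
by case: (o x) (ho x) => [|? ?] //= _; lia.
Qed.

(* The size hypothesis forces every [o x] to be a single letter. *)
Lemma flatten_map_rev o l : (forall n, o n != [::]) ->
  size (flatten (map o l)) = size l ->
  flatten (map o (rev l)) = rev (flatten (map o l)).
Proof.
move=> ho; elim: l => [|x l IH] //=.
rewrite size_cat rev_cons map_rcons flatten_rcons rev_cat.
have := size_flatten_map_ge o l ho.
case: (o x) (ho x) => [|y [|z u]] //= _ size_l size_xl; last by lia.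
by rewrite IH //; lia.
Qed.

Definition rev_just (n : nat) : term A * term A :=
  (tword 0 (iota 1 n), tword n (rev (iota 0 n))).

Lemma rev_iota0S n : rev (iota 0 n.+1) = n :: rev (iota 0 n).
Proof. by rewrite -addn1 iotaD rev_cat. Qed.

Lemma eval_rev_just o n :
  eval o (rev_just n).1 = flatten (map o (iota 0 n.+1)) /\
  eval o (rev_just n).2 = flatten (map o (rev (iota 0 n.+1))).
Proof. by rewrite !eval_tword rev_iota0S. Qed.

Lemma justification_rev_just n : justification (rev_just n).
Proof. by move=> x; rewrite /= !vars_tword -rev_iota0S mem_rev. Qed.

Lemma up_rev_just (x : A) w : up (x :: w) (rev (x :: w)) (rev_just (size w)).
Proof.
split; first exact: justification_rev_just.
exists (fun i => [:: nth x (x :: w) i]); split=> //.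
have [-> ->] := eval_rev_just (fun i => [:: nth x (x :: w) i]) (size w).
have letters l : flatten (map (fun i => [:: nth x (x :: w) i]) l) =
    map (nth x (x :: w)) l by elim: l => [|i l /= ->].
by rewrite !letters map_rev -/(mkseq _ (size (x :: w))) mkseq_nth.
Qed.

Lemma up_rev_just_rev {n b d} :
  up b d (rev_just n) -> size b = n.+1 -> d = rev b.
Proof.
move=> [_ [o [ho []]]]; have [-> ->] := eval_rev_just o n.
move=> eval_b <- size_b.
by rewrite -eval_b flatten_map_rev // eval_b size_b size_iota.
Qed.

Lemma arrow_prop_rev a b : a != [::] -> b != [::] -> size a = size b ->
  arrow_prop a (rev a) b (rev b).
Proof.
case: a => [|x a] // _; case: b => [|y b] // _ [size_ab]; right.
have J_rev : up2 (x :: a) (rev (x :: a)) (y :: b) (rev (y :: b)) (rev_just (size a)).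
  by split; [|rewrite size_ab]; apply: up_rev_just.
have nontriv := not_trivial_just x (rev_just (size a)).
split=> [|d' _ sub_J]; first by exists (rev_just (size a)).
have [_ up_d'] := sub_J _ J_rev nontriv.
rewrite (up_rev_just_rev up_d') /= ?size_ab //.
by split=> //; exists (rev_just (size a)).
Qed.

Lemma arrow_prop_rev_rev a b : a != [::] -> b != [::] -> size a = size b ->
  arrow_prop (rev a) a (rev b) b.
Proof.
move=> a0 b0 size_ab; rewrite -{2}(revK a) -{2}(revK b).
by apply: arrow_prop_rev; rewrite ?rev_neq0 ?size_rev.
Qed.

Lemma analogy_rev a b : a != [::] -> b != [::] -> size a = size b ->
  analogy a (rev a) b (rev b).
Proof.
move=> a0 b0 size_ab; have size_ba := esym size_ab.
split; first exact: arrow_prop_rev.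
split; first exact: arrow_prop_rev_rev.
by split; [apply: arrow_prop_rev | apply: arrow_prop_rev_rev].
Qed.

End ReversalAnalogy.

Theorem mainTheorem15 (A : finType) (hA : 0 < #|A|) :
  (forall a b : seq A, a != [::] -> b != [::] -> size a = size b ->
     analogy a (rev a) b (rev b)) /\
  (forall a : seq A, a != [::] -> analogy a (rev a) (rev a) a).
Proof.
(* [hA] is redundant: any non-empty word provides a letter. *)
split=> [|a a0]; first exact: analogy_rev.
have := @analogy_rev A a (rev a) a0 (rev_neq0 a0) (esym (size_rev a)).
by rewrite revK.
Qed.
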